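(* Consider a radial three-phase distribution grid on buses $\{0,\ldots,N\}$ (feeder bus $0$, each bus $n\geq1$ with parent $\pi_n<n$, line $n$ joining $\pi_n$ and $n$), with symmetric phase impedance matrices $\mathbf{Z}_n=\mathbf{Z}_n^{\top}\in\mathbb{C}^{3\times3}$ having entries $z_n^{ij}=r_n^{ij}+jx_n^{ij}$. Let $\mathbf{X}:=2\mathbf{M}\,\mathrm{bdiag}(\{\mathrm{Im}[\tilde{\mathbf{Z}}_n]\})\mathbf{M}^{\top}$ and $\mathbf{R}:=2\mathbf{M}\,\mathrm{bdiag}(\{\mathrm{Re}[\tilde{\mathbf{Z}}_n]\})\mathbf{M}^{\top}$, and let $\mathbf{X}_x:=2\mathbf{M}\,\mathrm{bdiag}(\{\tilde{\mathbf{X}}_n\})\mathbf{M}^{\top}$, where \[\tilde{\mathbf{X}}_n:=\frac12\begin{bmatrix}2x_n^{11}&-x_n^{12}&-x_n^{13}\\-x_n^{12}&2x_n^{22}&-x_n^{23}\\-x_n^{13}&-x_n^{23}&2x_n^{33}\end{bmatrix}.\] Fix $\mathbf{p}\in\mathbb{R}^{3N}$ and $v_0$, and let $\mathbf{v}(\mathbf{q}):=\mathbf{R}\mathbf{p}+\mathbf{X}\mathbf{q}+v_0\mathbf{1}_{3N}$. Starting from any $\mathbf{q}^0\in\mathbb{R}^{3N}$, consider $\mathbf{q}^{t+1}=\mathbf{q}^t-\mu(\mathbf{v}^t-v_0\mathbf{1}_{3N})$ with $\mathbf{v}^t:=\mathbf{v}(\mathbf{q}^t)$. If $\mu\in\left(0,\frac{2\lambda_{\min}(\mathbf{X}_x)}{\lambda_{\max}(\mathbf{X}^{\top}\mathbf{X})}\right)$,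 then $\mathbf{q}^t$ converges to the minimizer of $\min_{\mathbf{q}\in\mathbb{R}^{3N}}\tfrac12\|\mathbf{R}\mathbf{p}+\mathbf{X}\mathbf{q}\|_2^2$.
   Context: $\tilde{\mathbf{Z}}_n:=\operatorname{diag}(\boldsymbol{\alpha}^* )\mathbf{Z}_n\operatorname{diag}(\boldsymbol{\alpha})$ with $\boldsymbol{\alpha}:=[1~\alpha~\alpha^2]^{\top}$, $\alpha=e^{-j2\pi/3}$; $^*$ is entrywise conjugation, $\mathrm{Re},\mathrm{Im}$ are entrywise. $\mathbf{M}:=\mathbf{T}(\mathbf{I}_3\otimes\mathbf{F})\mathbf{T}^{\top}$, where: the full branch-bus incidence matrix $\tilde{\mathbf{A}}=[\mathbf{a}_0~\mathbf{A}]\in\mathbb{R}^{N\times(N+1)}$ has in row $n$ entry $+1$ at column $\pi_n$, $-1$ at column $n$, zeros elsewhere; $\mathbf{A}$ is the reduced incidence matrix (column of bus $0$ removed); $\mathbf{F}:=-\mathbf{A}^{-1}$; $\mathbf{T}:=[\mathbf{I}_3\otimes\mathbf{e}_1^{\top};\ldots;\mathbf{I}_3\otimes\mathbf{e}_N^{\top}]\in\mathbb{R}^{3N\times3N}$ (blocks stacked vertically) with $\mathbf{e}_n$ the $n$-th column of $\mathbf{I}_N$. $\mathrm{bdiag}(\{\mathbf{Y}_n\})$ is block diagonal with blocks $\mathbf{Y}_1,\ldots,\mathbf{Y}_N$. $\lambda_{\min},\lambda_{\max}$ denote smallest/largest eigenvalues of symmetric matrices. *)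

From HB Require Import structures.
From mathcomp Require Import all_boot all_order all_algebra.
From mathcomp Require Import all_classical all_reals all_analysis.
From mathcomp Require Import complex mxtens.
Set Implicit Arguments. Unset Strict Implicit. Unset Printing Implicit Defensive.
Import Order.TTheory GRing.Theory Num.Theory.
Import numFieldNormedType.Exports.
Local Open Scope ring_scope.

Section Grid.
Variable R : realType.

Definition alpha : R[i] := (cos (- (2 * pi / 3)) +i* sin (- (2 * pi / 3)))%C.

Definition alphav : 'cV[R[i]]_3 := \col_(k < 3) alpha ^+ k.

Definition conjM m n (A : 'M[R[i]]_(m, n)) : 'M[R[i]]_(m, n) :=
  map_mx (@conjc R) A.
Definition ReM m n (A : 'M[R[i]]_(m, n)) : 'M[R]_(m, n) := map_mx (@complex.Re R) A.
Definition ImM m n (A : 'M[R[i]]_(m, n)) : 'M[R]_(m, n) := map_mx (@complex.Im R) A.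

Definition Ztilde (Zn : 'M[R[i]]_3) : 'M[R[i]]_3 :=
  diag_mx (conjM alphav)^T *m Zn *m diag_mx alphav^T.

Definition Xtilde (Zn : 'M[R[i]]_3) : 'M[R]_3 :=
  (1 / 2) *: \matrix_(i < 3, j < 3)
     (if i == j then 2 * complex.Im (Zn i j) else - complex.Im (Zn i j)).

Variable N : nat.
(* lines are indexed by n : 'I_N; line n joins bus (par n) and bus n.+1
   (buses are 'I_N.+1, bus 0 is the feeder) *)
Variable par : 'I_N -> 'I_N.+1.

(* full branch-bus incidence matrix A~ = [a0 A] *)
Definition Afull : 'M[R]_(N, N.+1) :=
  \matrix_(n < N, k < N.+1) ((k == par n)%:R - (k == lift ord0 n)%:R).

Definition Ared : 'M[R]_N := col' ord0 Afull.

Definition Fmat : 'M[R]_N := - invmx Ared.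

Definition Tblock (n : 'I_N) : 'M[R]_(3 * 1, 3 * N) :=
  tensmx (1%:M : 'M[R]_3) (col n (1%:M : 'M[R]_N))^T.

Lemma sum_blocks_eq (p : nat) : (\sum_(n < N) p = p * N)%N.
Proof. by rewrite sum_nat_const card_ord mulnC. Qed.

Definition Tmat : 'M[R]_(3 * N) :=
  castmx (eq_trans (sum_blocks_eq (3 * 1)%N) (congr1 (muln^~ N) (muln1 3%N)),
          erefl (3 * N)) (\mxcol_(n < N) Tblock n).

Definition bdiag (Y : 'I_N -> 'M[R]_3) : 'M[R]_(3 * N) :=
  castmx (sum_blocks_eq 3%N,
          sum_blocks_eq 3%N) (\mxdiag_(n < N) Y n).

Definition Mmat : 'M[R]_(3 * N) :=
  Tmat *m castmx (erefl, erefl) (tensmx (1%:M : 'M[R]_3) Fmat) *m Tmat^T.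

Variable Z : 'I_N -> 'M[R[i]]_3.

Definition Xmat : 'M[R]_(3 * N) :=
  2 *: (Mmat *m bdiag (fun n => ImM (Ztilde (Z n))) *m Mmat^T).
Definition Rmat : 'M[R]_(3 * N) :=
  2 *: (Mmat *m bdiag (fun n => ReM (Ztilde (Z n))) *m Mmat^T).
Definition Xxmat : 'M[R]_(3 * N) :=
  2 *: (Mmat *m bdiag (fun n => Xtilde (Z n)) *m Mmat^T).

End Grid.

Definition lambda_min (R : realType) n (A : 'M[R]_n) : R :=
  inf [set a : R | eigenvalue A a]%classic.
Definition lambda_max (R : realType) n (A : 'M[R]_n) : R :=
  sup [set a : R | eigenvalue A a]%classic.

Definition sqnorm2 (R : realType) n (w : 'cV[R]_n) : R := \sum_(i < n) (w i 0) ^+ 2.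

(* The iteration is the gradient-type step q |-> q - mu (b + X q) with b = R p.
   Because every Z_n is symmetric, the symmetric part of X is X_x, so
   v^T X v >= lambda_min(X_x) |v|^2, while |X v|^2 <= lambda_max(X^T X) |v|^2.
   Hence v |-> v - mu X v multiplies |.|^2 by at most
   k = 1 - mu (2 lambda_min(X_x) - mu lambda_max(X^T X)), and k < 1 exactly
   under the step-size condition.  This makes X invertible, so q* := -X^-1 b
   annihilates the objective and is its minimiser, and the error q^t - q*
   decays like k^(t/2). *)

From Pilot Require Import Defs.
From HB Require Import structures.
From mathcomp Require Import all_boot all_order all_algebra.
From mathcomp Require Import all_classical all_reals all_analysis.
From mathcomp Require Import complex mxtens.
From mathcomp Require Import spectral sesquilinear.
From mathcomp Require Import ring lra.
Import Order.TTheory GRing.Theory Num.Theory.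
Import numFieldNormedType.Exports.
Set Implicit Arguments. Unset Strict Implicit. Unset Printing Implicit Defensive.
Local Open Scope ring_scope.

Section QuadraticForms.
Variable R : realType.

Definition qform n (S : 'M[R]_n) (v : 'cV[R]_n) : R := (v^T *m S *m v) 0 0.

Lemma sqnorm2E n (v : 'cV[R]_n) : sqnorm2 v = (v^T *m v) 0 0.
Proof. by rewrite mxE; apply: eq_bigr => i _; rewrite !mxE expr2. Qed.

Lemma sqnorm2_ge0 n (v : 'cV[R]_n) : 0 <= sqnorm2 v.
Proof. by apply: sumr_ge0 => i _; rewrite sqr_ge0. Qed.

Lemma sqnorm20 n : sqnorm2 (0 : 'cV[R]_n) = 0.
Proof. by rewrite /sqnorm2 big1 // => i _; rewrite mxE expr0n. Qed.

Lemma sqnorm2_delta n (i : 'I_n) : sqnorm2 (delta_mx i 0 : 'cV[R]_n) = 1.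
Proof.
rewrite /sqnorm2 (bigD1 i) //= big1 => [|k ki]; first by rewrite !mxE !eqxx expr1n addr0.
by rewrite !mxE (negbTE ki) expr0n.
Qed.

Lemma sqnorm2_eq0 n (v : 'cV[R]_n) : (sqnorm2 v == 0) = (v == 0).
Proof.
apply/eqP/eqP => [v0|->]; last exact: sqnorm20.
apply/matrixP => i j; rewrite ord1 mxE.
have /eqP := psumr_eq0P (fun i _ => sqr_ge0 (v i 0)) v0 (i := i) isT.
by rewrite sqrf_eq0 => /eqP.
Qed.

Lemma sqnorm2_gt0 n (v : 'cV[R]_n) : v != 0 -> 0 < sqnorm2 v.
Proof. by rewrite -sqnorm2_eq0 lt_def sqnorm2_ge0 andbT. Qed.

Lemma sqr_entry_le_sqnorm2 n (v : 'cV[R]_n) i : v i 0 ^+ 2 <= sqnorm2 v.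
Proof. by rewrite /sqnorm2 (bigD1 i) //= lerDl; apply: sumr_ge0 => k _; apply: sqr_ge0. Qed.

Lemma qform_mulTmx n (X : 'M[R]_n) (v : 'cV[R]_n) :
  qform (X^T *m X) v = sqnorm2 (X *m v).
Proof. by rewrite sqnorm2E /qform trmx_mul !mulmxA. Qed.

Lemma qformD n (S T : 'M[R]_n) (v : 'cV[R]_n) :
  qform (S + T) v = qform S v + qform T v.
Proof. by rewrite /qform mulmxDr mulmxDl mxE. Qed.

Lemma sqnorm2_subZ n (X : 'M[R]_n) (v : 'cV[R]_n) (mu : R) :
  sqnorm2 (v - mu *: (X *m v)) =
    sqnorm2 v - mu * qform (X + X^T) v + mu ^+ 2 * qform (X^T *m X) v.
Proof.
rewrite qformD !sqnorm2E /qform.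
have -> : (v - mu *: (X *m v))^T = v^T - mu *: (v^T *m X^T).
  by rewrite linearB linearZ /= trmx_mul.
rewrite mulmxBl !mulmxBr -!scalemxAl -!scalemxAr !mulmxA !mxE; ring.
Qed.

Lemma eigenvalue_qform n (S : 'M[R]_n) e :
  eigenvalue S e -> exists2 v : 'cV[R]_n, v != 0 & qform S v = e * sqnorm2 v.
Proof.
case/eigenvalueP => r Sr r0; exists r^T; first by rewrite trmx_eq0.
by rewrite sqnorm2E /qform trmxK Sr -scalemxAl mxE.
Qed.

Lemma eigenvalue_map (F K : fieldType) (f : {rmorphism F -> K}) n (A : 'M[F]_n) a :
  eigenvalue (map_mx f A) (f a) = eigenvalue A a.
Proof. by rewrite !eigenvalue_root_char -map_char_poly fmorph_root. Qed.

Local Open Scope sesquilinear_scope.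

Lemma eigenvalue_unitary_diag (C : numClosedFieldType) n (P : 'M[C]_n) (d : 'rV[C]_n) k :
  P \is unitarymx -> eigenvalue (P^t* *m diag_mx d *m P) (d 0 k).
Proof.
move=> /unitarymxP PPt; apply/eigenvalueP; exists (row k P).
  by rewrite !mulmxA -row_mul PPt -row_mul mul1mx row_diag_mx -scalemxAl -rowE.
apply/negP => /eqP Pk0.
have := congr1 (row k) PPt; rewrite row_mul Pk0 mul0mx => /rowP /(_ k).
by rewrite !mxE eqxx /= => /eqP; rewrite eq_sym oner_eq0.
Qed.

Lemma conjC_conjc (x : R[i]) : x^* = conjc x.
Proof.
have [->|x0] := eqVneq x 0; first by rewrite conjc0 conjC0.
by apply: (mulfI x0); rewrite -normCK sqr_normc.
Qed.

Lemma realsym_qform_spectral n (S : 'M[R]_n) : S^T = S ->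
  exists r : 'I_n -> R, (forall k, eigenvalue S (r k)) /\
    forall v : 'cV[R]_n, exists c : 'I_n -> R,
      [/\ forall k, 0 <= c k, sqnorm2 v = \sum_k c k & qform S v = \sum_k r k * c k].
Proof.
(* The complexification of S is Hermitian, hence unitarily diagonalisable; the
   weights c are the squared moduli of the coordinates of v in that basis. *)
move=> Ssym; pose SC := map_mx (real_complex R) S.
have SCh : SC \is hermsymmx.
  apply: realsym_hermsym; last first.
    by apply/mxOverP => i j; rewrite mxE; apply/complex_realP; exists (S i j).
  by apply/is_hermitianmxP; rewrite expr0 scale1r map_mx_id // /SC map_trmx Ssym.
have /hermitian_normalmx /orthomx_spectralP SCE := SCh.
set P := spectralmx SC in SCE; set d := spectral_diag SC in SCE.
have Pu : P \is unitarymx := spectral_unitarymx SC.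
have Pi : invmx P = P^t* by rewrite invmx_unitary.
have PtP : P^t* *m P = 1%:M by rewrite -Pi mulVmx // unitarymx_unit.
rewrite Pi in SCE.
pose r k := complex.Re (d 0 k).
have dE k : d 0 k = (real_complex R) (r k).
  by rewrite /r RRe_real //; apply: (mxOverP (hermitian_spectral_diag_real SCh)).
exists r; split=> [k|v].
  rewrite -(eigenvalue_map (real_complex R)); suff : eigenvalue SC (d 0 k) by rewrite dE.
  by rewrite SCE eigenvalue_unitary_diag.
pose u := map_mx (real_complex R) v^T; pose w := u *m P^t*.
pose c k := complex.Re (w 0 k * (w 0 k)^*).
have cE k : (real_complex R) (c k) = w 0 k * (w 0 k)^*.
  by rewrite RRe_real // ger0_real // conjC_conjc mulcJ_ge0.
have ut : u^t* = map_mx (real_complex R) v.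
  by apply/matrixP => i j; rewrite !mxE conjC_conjc conjc_real.
have wt : w^t* = P *m u^t* by rewrite /w trmx_mul map_mxM trmxCK.
exists c; split.
- by move=> k; rewrite /c -lecR cE conjC_conjc mulcJ_ge0.
- apply: complexI; rewrite sqnorm2E rmorph_sum /=.
  transitivity ((map_mx (real_complex R) (v^T *m v)) 0 0); first by rewrite [RHS]mxE.
  rewrite !map_mxM -/u -ut -{1}[u]mulmx1 -PtP !mulmxA -/w -(mulmxA _ P) -wt mxE.
  by apply: eq_bigr => k _; rewrite cE !mxE mulrC.
- apply: complexI; rewrite rmorph_sum /= /qform.
  transitivity ((map_mx (real_complex R) (v^T *m S *m v)) 0 0); first by rewrite [RHS]mxE.
  rewrite !map_mxM -/SC -/u -ut SCE !mulmxA -/w -(mulmxA _ P) -wt mul_mx_diag mxE.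
  by apply: eq_bigr => k _; rewrite rmorphM /= cE -dE !mxE; ring.
Qed.

Lemma eigenvalue_ge_qform n (S : 'M[R]_n) a e :
  (forall v, a * sqnorm2 v <= qform S v) -> eigenvalue S e -> a <= e.
Proof.
move=> Sa /eigenvalue_qform [v v0 Sv]; have := Sa v.
by rewrite Sv ler_pM2r // sqnorm2_gt0.
Qed.

Lemma eigenvalue_le_qform n (S : 'M[R]_n) a e :
  (forall v, qform S v <= a * sqnorm2 v) -> eigenvalue S e -> e <= a.
Proof.
move=> Sa /eigenvalue_qform [v v0 Sv]; have := Sa v.
by rewrite Sv ler_pM2r // sqnorm2_gt0.
Qed.

Lemma lambda_min_qform n (S : 'M[R]_n.+1) (v : 'cV[R]_n.+1) :
  S^T = S -> lambda_min S * sqnorm2 v <= qform S v.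
Proof.
case/realsym_qform_spectral => r [Sr Sc].
have [k0 _ r_min] := @arg_minP _ _ _ ord0 xpredT r isT.
have Sk0 u : r k0 * sqnorm2 u <= qform S u.
  have [c [c0 -> ->]] := Sc u; rewrite mulr_sumr.
  by apply: ler_sum => k _; apply: ler_wpM2r => //; apply: r_min.
apply: le_trans (Sk0 v); apply: ler_wpM2r; first exact: sqnorm2_ge0.
by apply: ge_inf (Sr k0); exists (r k0) => e; apply: eigenvalue_ge_qform.
Qed.

Lemma qform_lambda_max n (S : 'M[R]_n.+1) (v : 'cV[R]_n.+1) :
  S^T = S -> qform S v <= lambda_max S * sqnorm2 v.
Proof.
case/realsym_qform_spectral => r [Sr Sc].
have [k1 _ r_max] := @arg_maxP _ _ _ ord0 xpredT r isT.
have Sk1 u : qform S u <= r k1 * sqnorm2 u.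
  have [c [c0 -> ->]] := Sc u; rewrite mulr_sumr.
  by apply: ler_sum => k _; apply: ler_wpM2r => //; apply: r_max.
apply: le_trans (Sk1 v) _; apply: ler_wpM2r; first exact: sqnorm2_ge0.
by apply: ub_le_sup (Sr k1); exists (r k1) => e; apply: eigenvalue_le_qform.
Qed.

Lemma lambda_max_mx0 (S : 'M[R]_0) : lambda_max S = 0.
Proof.
rewrite /lambda_max (_ : [set a | eigenvalue S a]%classic = set0) ?sup0 //.
by apply/seteqP; split => a //=; rewrite /eigenvalue (flatmx0 (eigenspace S a)) eqxx.
Qed.

End QuadraticForms.

Lemma cvg_sqnorm2_contraction (R : realType) n (q : nat -> 'cV[R]_n) a k :
  0 <= k < 1 -> (forall t, sqnorm2 (q t.+1 - a) <= k * sqnorm2 (q t - a)) ->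
  (q @ \oo --> a)%classic.
Proof.
case/andP=> k0 k1 qk.
set s0 := sqnorm2 (q 0%N - a).
have qkt t : sqnorm2 (q t - a) <= k ^+ t * s0.
  elim: t => [|t IH]; first by rewrite expr0 mul1r.
  by rewrite exprS -mulrA; apply: le_trans (qk t) _; apply: ler_wpM2l.
have s00 : 0 <= s0 := sqnorm2_ge0 _.
apply/cvgrPdist_le => eps eps0.
have epss : 0 < eps ^+ 2 / (s0 + 1) by apply: divr_gt0; [exact: exprn_gt0 | lra].
have k_norm_lt1 : `|k| < 1 by rewrite ger0_norm.
have /cvgrPdist_le /(_ _ epss) := cvg_expr k_norm_lt1.
apply: filterS => t /=; rewrite sub0r normrN ger0_norm ?exprn_ge0 // => kt.
change (mx_norm (a - q t) <= eps).
rewrite mx_normrE; apply: bigmax_le => [|[i j] _]; first exact: ltW.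
have := sqr_entry_le_sqnorm2 (q t - a) i; rewrite ord1 /= !mxE => qti.
have ktl : k ^+ t * s0 <= eps ^+ 2.
  have s1 : 0 < s0 + 1 by lra.
  rewrite ler_pdivlMr // in kt; nra.
have := qkt t => qt; rewrite ler_norml; apply/andP; split; nra.
Qed.

Section GradientIteration.
Variables (R : realType) (n : nat) (X Xx : 'M[R]_n.+1).
Hypothesis X_symmetric_part : X + X^T = Xx + Xx.

Let Xx_sym : Xx^T = Xx.
Proof.
apply/matrixP => i j; have /matrixP /(_ i j) := X_symmetric_part.
have /matrixP /(_ j i) := X_symmetric_part; rewrite !mxE; lra.
Qed.

Let XtX_sym : (X^T *m X)^T = X^T *m X.
Proof. by rewrite trmx_mul trmxK. Qed.

Lemma lambda_max_mulTmx_ge0 : 0 <= lambda_max (X^T *m X).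
Proof.
have := qform_lambda_max (delta_mx 0 0) XtX_sym.
by rewrite qform_mulTmx sqnorm2_delta mulr1; apply: le_trans (sqnorm2_ge0 _).
Qed.

Lemma sqnorm2_gradient_step_le mu (v : 'cV[R]_n.+1) : 0 <= mu ->
  sqnorm2 (v - mu *: (X *m v))
    <= (1 - mu * (2 * lambda_min Xx - mu * lambda_max (X^T *m X))) * sqnorm2 v.
Proof.
move=> mu0; rewrite sqnorm2_subZ X_symmetric_part qformD.
have lo := lambda_min_qform v Xx_sym.
have hi := qform_lambda_max v XtX_sym.
nra.
Qed.

Variables (b : 'cV[R]_n.+1) (mu : R) (q : nat -> 'cV[R]_n.+1).
Hypothesis q_step : forall t, q t.+1 = q t - mu *: (b + X *m q t).
Hypothesis mu_bounds : 0 < mu < 2 * lambda_min Xx / lambda_max (X^T *m X).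

Let mu_gt0 : 0 < mu.
Proof. by case/andP: mu_bounds. Qed.

Let k := 1 - mu * (2 * lambda_min Xx - mu * lambda_max (X^T *m X)).

Let k_bounds : 0 <= k < 1.
Proof.
case/andP: mu_bounds => _ mu_lt.
(* lambda_max = 0 would make the upper bound on mu the junk value x / 0 = 0. *)
have lmax_gt0 : 0 < lambda_max (X^T *m X).
  rewrite lt_def lambda_max_mulTmx_ge0 andbT; apply: contraTneq mu_lt => ->.
  by rewrite invr0 mulr0 -leNgt ltW.
rewrite ltr_pdivlMr // in mu_lt.
have := sqnorm2_gradient_step_le (delta_mx 0 0) (ltW mu_gt0).
rewrite sqnorm2_delta mulr1 => /(le_trans (sqnorm2_ge0 _)) ->.
by have := mu_gt0; rewrite /k; nra.
Qed.

Lemma gradient_iteration_ker0 (v : 'cV[R]_n.+1) : X *m v = 0 -> v = 0.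
Proof.
move=> Xv; have := sqnorm2_gradient_step_le v (ltW mu_gt0).
rewrite -/k Xv scaler0 subr0 => v_le.
have := sqnorm2_ge0 v; case/andP: k_bounds => _ k1 v_ge0.
by apply/eqP; rewrite -sqnorm2_eq0 eq_le v_ge0 andbT; nra.
Qed.

Lemma gradient_iteration_unitmx : X \in unitmx.
Proof.
rewrite -unitmx_tr -row_free_unit -kermx_eq0; apply/eqP/row_matrixP => i.
rewrite row0; apply: trmx_inj; rewrite trmx0; apply: gradient_iteration_ker0.
by rewrite -[X in X *m _]trmxK -trmx_mul -row_mul mulmx_ker row0 trmx0.
Qed.

Lemma gradient_iteration_cvg :
  exists2 qs, b + X *m qs = 0 & (q @ \oo --> qs)%classic.
Proof.
pose qs := - (invmx X *m b).
have bE : b = - (X *m qs).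
  by rewrite /qs mulmxN opprK mulmxA mulmxV ?gradient_iteration_unitmx ?mul1mx.
exists qs; first by rewrite bE addNr.
apply: (cvg_sqnorm2_contraction (k := k)) => // t.
have -> : q t.+1 - qs = (q t - qs) - mu *: (X *m (q t - qs)).
  by rewrite q_step bE mulmxBr [- _ + _]addrC addrAC.
exact: sqnorm2_gradient_step_le (ltW mu_gt0).
Qed.

End GradientIteration.

Section ThreePhase.
Variable R : realType.

Lemma cos_2pi_div3 : cos (2 * pi / 3) = - 1 / 2 :> R.
Proof.
have pi_gt0 : 0 < pi :> R := pi_gt0 R.
have c_gt0 : 0 < cos (pi / 3) :> R by apply: cos_gt0_pihalf; apply/andP; split; lra.
have c2E : cos (2 * pi / 3) = - cos (pi / 3) :> R.
  by rewrite (_ : 2 * pi / 3 = - (pi / 3) + pi); [rewrite cosDpi cosN | field].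
have c2E' : cos (2 * pi / 3) = cos (pi / 3) ^+ 2 *+ 2 - 1 :> R.
  by rewrite (_ : 2 * pi / 3 = (pi / 3) *+ 2) ?cos_mulr2n // mulr2n; field.
rewrite c2E in c2E' *; rewrite mulr2n in c2E'.
have /eqP : (2 * cos (pi / 3) - 1) * (cos (pi / 3) + 1) = 0 :> R by nra.
by rewrite mulf_eq0 => /orP[] /eqP; lra.
Qed.

Lemma Re_conj_alphaX_mul (i j : 'I_3) :
  complex.Re (conjc (alpha R ^+ i) * alpha R ^+ j) = if i == j then 1 else - 1 / 2.
Proof.
have cE := cos_2pi_div3; rewrite -cosN in cE.
have csE := cos2Dsin2 (- (2 * pi / 3)) : _ = 1 :> R.
rewrite /alpha; move: (cos _) (sin _) cE csE => c s cE csE.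
rewrite !rmorphXn /=.
by case: i => [[|[|[|?]]] ?] //; case: j => [[|[|[|?]]] ?] //=;
  rewrite ?expr0 ?expr1 ?expr2 /=; nra.
Qed.

Lemma Im_mul_add_conj (u z : R[i]) :
  complex.Im (u * z) + complex.Im (conjc u * z) = 2 * complex.Re u * complex.Im z.
Proof. by case: u => a b; case: z => c d /=; ring. Qed.

Lemma ImM_Ztilde_symmetric_part (Zn : 'M[R[i]]_3) : Zn^T = Zn ->
  Defs.ImM (Ztilde Zn) + (Defs.ImM (Ztilde Zn))^T = Xtilde Zn + Xtilde Zn.
Proof.
move=> Zsym; apply/matrixP => i j.
(* Entries (i, j) and (j, i) of Im Z~ add up to 2 Re (conj alpha^i alpha^j) x^ij. *)
have Zji : Zn j i = Zn i j by rewrite -{1}Zsym mxE.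
rewrite /Ztilde mul_mx_diag mul_diag_mx !mxE Zji.
rewrite mulrAC [conjc (alpha R ^+ j) * _ * _]mulrAC.
have -> : conjc (alpha R ^+ j) * alpha R ^+ i = conjc (conjc (alpha R ^+ i) * alpha R ^+ j).
  by rewrite rmorphM /= conjcK mulrC.
by rewrite Im_mul_add_conj Re_conj_alphaX_mul; case: eqVneq => [->|_]; rewrite ?eqxx /=; lra.
Qed.

Lemma bdiag_symmetric_part N (Y Y' : 'I_N -> 'M[R]_3) :
  (forall n, Y n + (Y n)^T = Y' n + Y' n) ->
  bdiag Y + (bdiag Y)^T = bdiag Y' + bdiag Y'.
Proof.
move=> YY'; rewrite /bdiag trmx_cast tr_mxdiag /=.
have castmxD m m' (e : (m = m') * (m = m')) (A B : 'M[R]_m) :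
    castmx e (A + B) = castmx e A + castmx e B.
  by apply/matrixP => i j; rewrite !(castmxE, mxE).
rewrite -!castmxD -!mxdiagD; congr castmx; apply: eq_mxdiag => n; apply: YY'.
Qed.

Lemma Xmat_symmetric_part N (par : 'I_N -> 'I_N.+1) (Z : 'I_N -> 'M[R[i]]_3) :
  (forall n, (Z n)^T = Z n) -> Xmat par Z + (Xmat par Z)^T = Xxmat par Z + Xxmat par Z.
Proof.
move=> Zsym; rewrite /Xmat /Xxmat linearZ /= -!scalerDr; congr (_ *: _).
move: (Mmat R par) => M; rewrite !trmx_mul trmxK !mulmxA -mulmxDl -mulmxDr.
rewrite (bdiag_symmetric_part (Y' := fun n => Xtilde (Z n))) ?mulmxDr ?mulmxDl //.
by move=> n; apply: ImM_Ztilde_symmetric_part.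
Qed.

End ThreePhase.

Theorem proposition5 (R : realType) (N : nat) (par : 'I_N -> 'I_N.+1)
  (Hpar : forall n : 'I_N, (par n < n.+1)%N)
  (Z : 'I_N -> 'M[R[i]]_3) (HZ : forall n : 'I_N, (Z n)^T = Z n)
  (p : 'cV[R]_(3 * N)) (v0 mu : R) (q : nat -> 'cV[R]_(3 * N))
  (Hq : forall t : nat,
     q t.+1 = q t - mu *: ((Rmat par Z *m p + Xmat par Z *m q t + v0 *: const_mx 1)
                           - v0 *: const_mx 1))
  (Hmu : 0 < mu < 2 * lambda_min (Xxmat par Z)
                  / lambda_max ((Xmat par Z)^T *m Xmat par Z)) :
  exists qstar : 'cV[R]_(3 * N),
    (forall q' : 'cV[R]_(3 * N),
       (1 / 2) * sqnorm2 (Rmat par Z *m p + Xmat par Z *m qstar)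
       <= (1 / 2) * sqnorm2 (Rmat par Z *m p + Xmat par Z *m q'))
    /\ (q @ \oo --> qstar)%classic.
Proof.
case: N => [|N] in par Hpar Z HZ p q Hq Hmu *.
  by move: Hmu; rewrite lambda_max_mx0 invr0 mulr0 => /andP[/lt_trans/[apply]]; rewrite ltxx.
have q_step t : q t.+1 = q t - mu *: (Rmat par Z *m p + Xmat par Z *m q t).
  by rewrite Hq addrK.
have [qs qs_opt q_cvg] :=
  gradient_iteration_cvg (Xmat_symmetric_part par HZ) q_step Hmu.
exists qs; split => // q'.
by rewrite qs_opt sqnorm20 mulr0 mulr_ge0 ?sqnorm2_ge0.
Qed.
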